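(* Let $\mathcal G$ be a doubly connected molecular graph. Construct $\mathcal G_{new}$ from $\mathcal G$ as follows: add a new molecule $\mathcal M_{new}$; replace a diffusive edge $b_0$ of $\mathcal G$ joining molecules $\mathcal M_1$ and $\mathcal M_2$ by two diffusive edges, $b_1$ joining $\mathcal M_1$ and $\mathcal M_{new}$ and $b_2$ joining $\mathcal M_2$ and $\mathcal M_{new}$; and replace another diffusive edge $b\neq b_0$ of $\mathcal G$ joining molecules $\mathcal M_3$ and $\mathcal M_4$ by two diffusive edges, $b_3$ joining $\mathcal M_3$ and $\mathcal M_{new}$ and $b_4$ joining $\mathcal M_4$ and $\mathcal M_{new}$. If a blue solid edge is redundant in $\mathcal G$, then it is also redundant in $\mathcal G_{new}$.
   Context: A molecular graph is a finite multigraph whose vertices are called molecules and each of whose edges joins two distinct molecules and is either a diffusive edge or a blue solid edge (parallel edges are allowed). A molecular graph is doubly connected if there exist two disjoint sets of edges, $\mathcal B_{black}$ consisting only of diffusive edges and $\mathcal B_{blue}$ consisting only of blue solid or diffusive edges, such that each of $\mathcal B_{black}$ and $\mathcal B_{blue}$ contains a spanning tree of the set of all molecules. A blue solid edge $e$ of a doubly connected graph is redundant if the graph obtained by deleting $e$ is still doubly connected. *)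

From mathcomp Require Import all_boot.
Set Implicit Arguments. Unset Strict Implicit. Unset Printing Implicit Defensive.

(* A molecular graph: molecules V (finType), edge labels E (finType), an edge
   set S : {set E}, endpoint map [ends] (unordered: the pair's order is
   irrelevant) and a boolean [diffusive] (true = diffusive edge, false = blue
   solid edge).  Parallel edges are allowed (distinct labels, same ends). *)
Section MolecularGraph.
Variables (V E : finType) (ends : E -> V * V) (diffusive : pred E).

Definition adjB (B : {set E}) : rel V := fun x y =>
  [exists e in B, (ends e == (x, y)) || (ends e == (y, x))].

Definition spans (B : {set E}) : Prop := forall x y : V, connect (adjB B) x y.

Definition spanning_tree (T : {set E}) : Prop :=
  spans T /\ (forall e, e \in T -> ~ spans (T :\ e)).

Definition contains_spanning_tree (B : {set E}) : Prop :=
  exists T : {set E}, T \subset B /\ spanning_tree T.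

Definition molecular (S : {set E}) : Prop :=
  forall e, e \in S -> (ends e).1 != (ends e).2.

Definition doubly_connected (S : {set E}) : Prop :=
  exists Bblack Bblue : {set E},
    [/\ Bblack \subset S, Bblue \subset S, [disjoint Bblack & Bblue],
        (forall e, e \in Bblack -> diffusive e) &
        contains_spanning_tree Bblack /\ contains_spanning_tree Bblue].

Definition redundant (S : {set E}) (e : E) : Prop :=
  [/\ doubly_connected S, e \in S, ~~ diffusive e & doubly_connected (S :\ e)].

End MolecularGraph.

(* The construction of G_new from G (edge set [setT] of E), b0, b.
   Molecules: option V, with None = M_new.  Edges: E + 'I_4, where inl e is an
   old edge and inr 0,1,2,3 are b1,b2,b3,b4. *)
Section Construction.
Variables (V E : finType) (ends : E -> V * V) (diffusive : pred E) (b0 b : E).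

Definition new_ends (x : E + 'I_4) : option V * option V :=
  match x with
  | inl e => (Some (ends e).1, Some (ends e).2)
  | inr i => match val i with
             | 0 => (Some (ends b0).1, None)
             | 1 => (Some (ends b0).2, None)
             | 2 => (Some (ends b).1, None)
             | _ => (Some (ends b).2, None)
             end
  end.

Definition new_diffusive (x : E + 'I_4) : bool :=
  match x with inl e => diffusive e | inr _ => true end.

Definition new_edges : {set E + 'I_4} :=
  (inl @: (setT :\ b0 :\ b)) :|: [set inr i | i : 'I_4].

End Construction.

From mathcomp Require Import all_boot.
Set Implicit Arguments. Unset Strict Implicit. Unset Printing Implicit Defensive.

(* Split the black and blue trees of G along b0 and b.  A colour class holding
   b0 but not b receives b1, b2, which rejoin M1 and M2 through M_new (and
   likewise with b, b3, b4).  A class holding both receives three of the four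
   new edges and the other class the fourth: deleting two edges from a
   connected graph cannot separate {M1, M2} from {M3, M4}, so some M_i stays
   linked to another M_j, and the missing edge is taken to be the one at M_i.
   Since the construction commutes with deleting the old edge e, the same
   argument applied to G \ e gives the redundancy of e in G_new. *)

Lemma connect_homo (T U : finType) (e : rel T) (e' : rel U) (f : T -> U) :
  (forall x y, e x y -> connect e' (f x) (f y)) ->
  forall x y, connect e x y -> connect e' (f x) (f y).
Proof.
move=> homo_f x y /connectP [p e_p ->]; elim: p x e_p => [|z p IHp] x /=.
  by rewrite connect0.
by case/andP=> /homo_f exz /IHp; apply: connect_trans.
Qed.

Section Adjacency.
Variables (V E : finType) (ends : E -> V * V).
Implicit Types B C : {set E}.

Lemma adjB_sym B : symmetric (adjB ends B).
Proof. by move=> x y; apply: eq_existsb => g; rewrite orbC. Qed.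

Lemma connect_adjB_sym B : connect_sym (adjB ends B).
Proof. exact/sym_connect_sym/adjB_sym. Qed.

Lemma adjB_ends B g : g \in B -> adjB ends B (ends g).1 (ends g).2.
Proof.
by move=> gB; apply/existsP; exists g; rewrite gB -surjective_pairing eqxx.
Qed.

Lemma adjB_closed B (a : {pred V}) :
  (forall g, g \in B -> ((ends g).1 \in a) = ((ends g).2 \in a)) ->
  closed (adjB ends B) a.
Proof.
move=> a_ends x y /existsP [g /andP [/a_ends a_g /orP [] /eqP eg]];
  by rewrite eg in a_g.
Qed.

Lemma spansS B C : B \subset C -> spans ends B -> spans ends C.
Proof.
move=> sBC spB x y; apply: connect_sub (spB x y) => u v.
case/existsP=> g /andP [gB uv].
by apply/connect1/existsP; exists g; rewrite (subsetP sBC).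
Qed.

Lemma contains_spanning_treeP B :
  contains_spanning_tree ends B <-> spans ends B.
Proof.
split=> [[T [sTB [spT _]]] | spB]; first exact: spansS spT.
pose spansb T := [forall x, forall y, connect (adjB ends T) x y].
have spansP T : reflect (spans ends T) (spansb T).
  apply: (iffP forallP) => [sp x y | sp x]; last by apply/forallP.
  exact: forallP (sp x) y.
have [T /minsetP [/andP [sTB /spansP spT] minT]] :
    {T | minset [pred T : {set E} | (T \subset B) && spansb T] T}.
  by apply: ex_minset; exists B; rewrite /= subxx; apply/spansP.
exists T; split=> //; split=> // g gT /spansP spTg.
have sTgB := subset_trans (subD1set T g) sTB.
have /setP /(_ g) := minT _ (introT andP (conj sTgB spTg)) (subD1set T g).
by rewrite !inE eqxx gT.
Qed.

End Adjacency.

Lemma connect_adjB_map (V E U F : finType) (ends : E -> V * V)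
    (ends' : F -> U * U) (f : V -> U) (B : {set E}) (B' : {set F}) :
  (forall g, g \in B ->
     connect (adjB ends' B') (f (ends g).1) (f (ends g).2)) ->
  forall x y, connect (adjB ends B) x y -> connect (adjB ends' B') (f x) (f y).
Proof.
move=> link; apply: connect_homo => x y /existsP [g /andP [/link lg]].
by case/orP=> /eqP eg; rewrite eg /= in lg; rewrite // connect_adjB_sym.
Qed.

Section SumSet.
Variables A B : finType.
Implicit Types (X : {set A}) (Y : {set B}).

Definition setSum X Y : {set A + B} :=
  [set x | match x with inl a => a \in X | inr b => b \in Y end].

Lemma in_setSuml X Y a : (inl a \in setSum X Y) = (a \in X).
Proof. by rewrite inE. Qed.

Lemma in_setSumr X Y b : (inr b \in setSum X Y) = (b \in Y).
Proof. by rewrite inE. Qed.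

Lemma setSumS X X' Y Y' :
  X \subset X' -> Y \subset Y' -> setSum X Y \subset setSum X' Y'.
Proof.
by move=> sX sY; apply/subsetP => -[a|b]; rewrite !inE; apply: subsetP.
Qed.

Lemma disjoint_setSum X X' Y Y' :
  [disjoint X & X'] -> [disjoint Y & Y'] ->
  [disjoint setSum X Y & setSum X' Y'].
Proof.
move=> dX dY; apply/pred0P => -[a|b] /=; rewrite !inE.
- by have [/(disjointFr dX) ->|] := boolP (a \in X).
- by have [/(disjointFr dY) ->|] := boolP (b \in Y).
Qed.

Lemma setSumD1l X Y a : setSum X Y :\ inl a = setSum (X :\ a) Y.
Proof. by apply/setP => -[a'|b]; rewrite !inE. Qed.

End SumSet.

Section Subdivision.
Variables (V E : finType) (ends : E -> V * V) (diffusive : pred E) (b0 b : E).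
Implicit Types (S B : {set E}) (Bn : {set E + 'I_4}) (W : {set 'I_4}).

Local Notation N := (new_ends ends b0 b).
Local Notation D := [set b0; b].
Local Notation b1 := (@Ordinal 4 0 isT).
Local Notation b2 := (@Ordinal 4 1 isT).
Local Notation b3 := (@Ordinal 4 2 isT).
Local Notation b4 := (@Ordinal 4 3 isT).
Local Notation linked Bn := (connect (adjB N Bn)).

Definition attach (i : 'I_4) : V :=
  match val i with
  | 0 => (ends b0).1 | 1 => (ends b0).2 | 2 => (ends b).1 | _ => (ends b).2
  end.

Lemma new_ends_inr i : N (inr i) = (Some (attach i), None).
Proof. by case: i => [[|[|[|[|n]]]] ?]. Qed.

Lemma ends_b0 : ends b0 = (attach b1, attach b2).
Proof. exact: surjective_pairing. Qed.

Lemma ends_b : ends b = (attach b3, attach b4).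
Proof. exact: surjective_pairing. Qed.

Definition subdivide (S : {set E}) : {set E + 'I_4} := setSum (S :\: D) setT.

Lemma new_edgesE : new_edges b0 b = subdivide setT.
Proof.
apply/setP => -[g|i]; rewrite /new_edges !inE; last by rewrite imset_f ?orbT.
rewrite mem_imset; last by move=> ? ? [].
by case: imsetP => [[? _] // | _]; rewrite !inE orbF negb_or !andbT [RHS]andbC.
Qed.

Lemma subdivideD1 S g : subdivide S :\ inl g = subdivide (S :\ g).
Proof. by rewrite /subdivide setSumD1l !setDDl setUC. Qed.

Lemma linked_inl Bn g :
  inl g \in Bn -> linked Bn (Some (ends g).1) (Some (ends g).2).
Proof. by move=> gBn; apply: connect1; apply: (adjB_ends N gBn). Qed.

Lemma linked_attach Bn i : inr i \in Bn -> linked Bn (Some (attach i)) None.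
Proof. by move/(adjB_ends N)/connect1; rewrite new_ends_inr. Qed.

Lemma linked_attach2 Bn i j :
  inr i \in Bn -> inr j \in Bn -> linked Bn (Some (attach i)) (Some (attach j)).
Proof.
move=> /linked_attach iBn /linked_attach jBn.
by apply: connect_trans iBn _; rewrite connect_adjB_sym.
Qed.

Lemma spans_subdivide B Bn :
    spans ends B -> (forall g, g \in B :\: D -> inl g \in Bn) ->
    (b0 \in B -> linked Bn (Some (attach b1)) (Some (attach b2))) ->
    (b \in B -> linked Bn (Some (attach b3)) (Some (attach b4))) ->
    (exists z, linked Bn (Some z) None) ->
  spans N Bn.
Proof.
move=> spB keep link0 link [z zNone].
have old x y : linked Bn (Some x) (Some y).
  apply: (connect_adjB_map (f := Some)) (spB x y) => g.
  have [-> b0B | g_b0] := eqVneq g b0; first by rewrite ends_b0; apply: link0.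
  have [-> bB | g_b gB] := eqVneq g b; first by rewrite ends_b; apply: link.
  by apply/linked_inl/keep; rewrite !inE negb_or g_b0 g_b.
have sym := connect_adjB_sym N Bn.
case=> [x|] [y|] //; first exact: connect_trans (old x z) zNone.
by rewrite sym; apply: connect_trans (old y z) zNone.
Qed.

Lemma spans_subdivide_pairs B W :
    spans ends B -> (b0 \in B -> [set b1; b2] \subset W) ->
    (b \in B -> [set b3; b4] \subset W) -> W != set0 ->
  spans N (setSum (B :\: D) W).
Proof.
move=> spB sub0 sub /set0Pn [i iW].
have inW j : j \in W -> inr j \in setSum (B :\: D) W by rewrite in_setSumr.
apply: (spans_subdivide spB) => [g | /sub0/subsetP W12 | /sub/subsetP W34 |].
- by rewrite in_setSuml.
- by apply: linked_attach2; apply/inW/W12; rewrite !inE eqxx ?orbT.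
- by apply: linked_attach2; apply/inW/W34; rewrite !inE eqxx ?orbT.
by exists (attach i); apply/linked_attach/inW.
Qed.

Lemma deleted_edges_link B :
  spans ends B ->
  exists i j, i != j /\ connect (adjB ends (B :\: D)) (attach i) (attach j).
Proof.
move=> spB; set R := connect (adjB ends (B :\: D)).
pose K := [pred v | R (attach b1) v || R (attach b2) v].
have [|K3] := boolP (attach b3 \in K).
  by case/orP=> ?; [exists b1, b3 | exists b2, b3].
have [|K4] := boolP (attach b4 \in K).
  by case/orP=> ?; [exists b1, b4 | exists b2, b4].
suff /closed_connect /(_ _ _ (spB (attach b1) (attach b3))) :
    closed (adjB ends B) K.
  by rewrite (negbTE K3) !inE /R connect0.
apply: adjB_closed => g gB.
have [-> | g_b0] := eqVneq g b0.
  by rewrite ends_b0 !inE /R !connect0 orbT.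
have [-> | g_b] := eqVneq g b; first by rewrite ends_b (negbTE K3) (negbTE K4).
have /connect1 Rg : adjB ends (B :\: D) (ends g).1 (ends g).2.
  by apply: adjB_ends; rewrite !inE negb_or g_b0 g_b.
by rewrite !inE /R !(same_connect_r (connect_adjB_sym _ _) Rg).
Qed.

Lemma spans_subdivide_but_one B :
  spans ends B -> exists i, spans N (setSum (B :\: D) (~: [set i])).
Proof.
move=> spB; have [i [j [ij Rij]]] := deleted_edges_link spB.
exists i; set Bn := setSum _ _.
have inBn k : k != i -> inr k \in Bn by rewrite in_setSumr !inE.
have attach_new k : linked Bn (Some (attach k)) None.
  have [-> | ki] := eqVneq k i; last exact/linked_attach/inBn.
  apply: connect_trans (linked_attach (inBn j _)); last by rewrite eq_sym.
  by apply: (connect_adjB_map (f := Some)) Rij => g gB; apply/linked_inl;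
    rewrite in_setSuml.
have link k l : linked Bn (Some (attach k)) (Some (attach l)).
  by apply: connect_trans (attach_new k) _; rewrite connect_adjB_sym.
apply: (spans_subdivide spB) => // [g|]; first by rewrite in_setSuml.
by exists (attach i).
Qed.

Lemma spans_subdivide_disjoint B1 B2 :
    spans ends B1 -> spans ends B2 -> [disjoint B1 & B2] ->
  exists W1 W2, [/\ [disjoint W1 & W2], spans N (setSum (B1 :\: D) W1)
                  & spans N (setSum (B2 :\: D) W2)].
Proof.
wlog nD2 : B1 B2 / ~~ ((b0 \in B2) && (b \in B2)).
  move=> wlog sp1 sp2 d12.
  have [/andP [b0B2 _] | nD2] := boolP ((b0 \in B2) && (b \in B2)).
    2: exact: wlog nD2 sp1 sp2 d12.
  have nD1 : ~~ ((b0 \in B1) && (b \in B1)) by rewrite (disjointFl d12 b0B2).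
  rewrite disjoint_sym in d12.
  have [W2 [W1 [dW ? ?]]] := wlog B2 B1 nD1 sp2 sp1 d12.
  by exists W1, W2; rewrite disjoint_sym.
move=> sp1 sp2 d12.
have B1F := disjointFr d12; have B2F := disjointFl d12.
have set1_neq0 (i : 'I_4) : [set i] != set0.
  by apply/set0Pn; exists i; rewrite inE.
have pair_neq0 (i j : 'I_4) : [set i; j] != set0.
  by apply/set0Pn; exists i; rewrite !inE eqxx.
have dP : [disjoint [set b1; b2] & [set b3; b4]].
  by apply/pred0P => -[[|[|[|[|?]]]] ?]; rewrite !inE.
have [/andP [b0B1 bB1] | nD1] := boolP ((b0 \in B1) && (b \in B1)).
  have [i spi] := spans_subdivide_but_one sp1.
  exists (~: [set i]), [set i]; split=> //.
    by rewrite disjoint_sym disjoints1 !inE eqxx.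
  by apply: spans_subdivide_pairs; rewrite ?(B1F _ b0B1) ?(B1F _ bB1).
have [b0B1_or_bB2 | ] := boolP ((b0 \in B1) || (b \in B2)).
  exists [set b1; b2], [set b3; b4]; split=> //;
    apply: spans_subdivide_pairs => //.
  - move=> bB1; move: nD1 b0B1_or_bB2.
    by rewrite bB1 (B1F _ bB1) andbT orbF => /negbTE ->.
  - move=> b0B2; move: nD2 b0B1_or_bB2.
    by rewrite b0B2 (B2F _ b0B2) /= => /negbTE ->.
rewrite negb_or => /andP [/negbTE b0B1 /negbTE bB2].
exists [set b3; b4], [set b1; b2]; rewrite disjoint_sym; split=> //;
  by apply: spans_subdivide_pairs; rewrite ?b0B1 ?bB2.
Qed.

Lemma doubly_connected_subdivide S :
  doubly_connected ends diffusive S ->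
  doubly_connected N (new_diffusive diffusive) (subdivide S).
Proof.
case=> [Bk [Bl [sBk sBl dkl dfk [/contains_spanning_treeP spk
                                  /contains_spanning_treeP spl]]]].
have [Wk [Wl [dW spWk spWl]]] := spans_subdivide_disjoint spk spl dkl.
exists (setSum (Bk :\: D) Wk), (setSum (Bl :\: D) Wl); split.
- by apply: setSumS; [apply: setSD | apply: subsetT].
- by apply: setSumS; [apply: setSD | apply: subsetT].
- apply: disjoint_setSum dW; apply: disjointWl (subsetDl _ _) _.
  exact: disjointWr (subsetDl _ _) dkl.
- by case=> [g|i] //; rewrite in_setSuml => /setDP [/dfk].
by split; apply/contains_spanning_treeP.
Qed.

End Subdivision.

Theorem claimA5 (V E : finType) (ends : E -> V * V) (diffusive : pred E)
  (b0 b : E) :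
  molecular ends setT ->
  doubly_connected ends diffusive setT ->
  diffusive b0 -> diffusive b -> b != b0 ->
  forall e : E, redundant ends diffusive setT e ->
  redundant (new_ends ends b0 b) (new_diffusive diffusive)
            (new_edges b0 b) (inl e).
Proof.
move=> _ _ diff_b0 diff_b _ e [dcG _ solid_e dcGe].
have e_b0 : e != b0 by apply: contraNneq solid_e => ->.
have e_b : e != b by apply: contraNneq solid_e => ->.
split=> //; rewrite new_edgesE.
- exact: doubly_connected_subdivide.
- by rewrite in_setSuml !inE negb_or e_b0 e_b.
by rewrite subdivideD1; apply: doubly_connected_subdivide.
Qed.
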